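(* If there exists a depth assignment $d:\Sigma^n\to\Sigma$ such that the valid subgraph of $B_n$ has a Hamiltonian cycle, then such a cycle $s_0,s_1,\dots,s_{N-1}$ (with $N=k^n$) corresponds to a de Bruijn sequence $s_0[0]s_1[0]\cdots s_{N-1}[0]$ of order $n$ whose discrepancy is at most $n+1$.
   Context: Let $k\ge 1$ be an integer, $\Sigma=\{0,1,\dots,k-1\}$ with arithmetic on symbols taken modulo $k$, and $n\ge 1$. For $s\in\Sigma^n$ write $s=s[0]\cdots s[n-1]$. The de Bruijn graph $B_n$ has node set $\Sigma^n$ and an arc $(s,t)$ iff $s[1]\cdots s[n-1]=t[0]\cdots t[n-2]$. A depth assignment is any function $d:\Sigma^n\to\Sigma$, written $s\mapsto d_s$. An arc $(s,t)$ of $B_n$ is valid (with respect to $d$) if, with $b=s[0]$ and $c=t[n-1]$, either ($b+1=c$ and $d_s=d_t$) or ($b+1=d_t$ and $c=d_s$); the valid arcs (on all of $\Sigma^n$) form the valid subgraph. A de Bruijn sequence of order $n$ is a circular string of length $k^n$ in which every string in $\Sigma^n$ occurs exactly once. The discrepancy of a string $w$ is the maximum over all substrings $s$ of $w$ (viewed circularly) of $\max_{a\in\Sigma}|s|_a-\min_{c\in\Sigma}|s|_c$, where $|s|_a$ is the number of occurrences of $a$ in $s$. *)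

From mathcomp Require Import all_boot.
Set Implicit Arguments. Unset Strict Implicit. Unset Printing Implicit Defensive.

Definition node (k n : nat) := (n.-tuple 'I_k)%type.

Definition vals k n (s : node k n) : seq nat := map val s.

Definition dB_arc k n (s t : node k n) : bool :=
  drop 1 (vals s) == take n.-1 (vals t).

Definition valid_arc k n (d : node k n -> 'I_k) (s t : node k n) : bool :=
  let b := head 0 (vals s) in
  let c := last 0 (vals t) in
  dB_arc s t &&
  ((((b + 1) %% k == c) && (d s == d t)) ||
   (((b + 1) %% k == val (d t)) && (c == val (d s)))).

Definition hamiltonian_cycle (T : finType) (e : rel T) (c : seq T) : Prop :=
  [/\ uniq c, (forall x : T, x \in c) & cycle e c].

Definition cwindow (w : seq nat) (i l : nat) : seq nat :=
  [seq nth 0 w ((i + j) %% size w) | j <- iota 0 l].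

Definition occurrences (w u : seq nat) : nat :=
  count (fun i => cwindow w i (size u) == u) (iota 0 (size w)).

Definition de_bruijn (k n : nat) (w : seq nat) : Prop :=
  [/\ size w = k ^ n, all (fun a => a < k) w &
      forall s : node k n, occurrences w (vals s) = 1].

Definition discrepancy (k : nat) (w : seq nat) : nat :=
  \max_(i < size w) \max_(l < (size w).+1) \max_(a < k) \max_(c < k)
     (count_mem (a : nat) (cwindow w i l) - count_mem (c : nat) (cwindow w i l)).

From mathcomp Require Import all_boot zify.
Set Implicit Arguments. Unset Strict Implicit. Unset Printing Implicit Defensive.

(* Consecutive nodes of the cycle overlap in n - 1 symbols, so the length-n
   circular window of w starting at position i is s_i itself; as the cycle visits
   every node exactly once, w is a de Bruijn sequence.
   For the discrepancy fix symbols a <> b and let A be the cyclic interval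
   (b, a] of the alphabet.  The potential
   phi(s) = #{positions of s with a symbol in A} + [d_s in A]  lies in [0, n + 1],
   and along a valid arc s -> t whose source starts with x, the symbol shifted out
   and the symbol shifted in (x + 1 or d_t) balance up to
   phi(t) - phi(s) = [x = b] - [x = a].
   Telescoping along a window gives |window|_a - |window|_b = phi(start) - phi(end)
   <= n + 1. *)

Definition in_cyc_interval (lo hi x : nat) : bool :=
  if lo < hi then (lo < x) && (x <= hi) else (x <= hi) || (lo < x).

Lemma in_cyc_interval_succ k lo hi x : lo < k -> hi < k -> lo != hi -> x < k ->
  in_cyc_interval lo hi ((x + 1) %% k) + (x == hi) = in_cyc_interval lo hi x + (x == lo).
Proof.
move=> lo_k hi_k /eqP lo_hi x_k.
have -> : (x + 1) %% k = if x + 1 < k then x + 1 else 0.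
  case: ltnP => [x1_k|k_x1]; first exact: modn_small.
  by rewrite (_ : x + 1 = k) ?modnn //; lia.
by rewrite /in_cyc_interval; case: ifP; case: ifP; lia.
Qed.

Lemma cwindowS w i l :
  cwindow w i l.+1 = rcons (cwindow w i l) (nth 0 w ((i + l) %% size w)).
Proof. by rewrite /cwindow -addn1 iotaD map_cat -cats1. Qed.

Lemma count_cwindow_sub_le (w : seq nat) (f : nat -> nat) (a b : nat) :
  (forall m, f m.+1 + (nth 0 w (m %% size w) == a) = f m + (nth 0 w (m %% size w) == b)) ->
  forall i l, count_mem a (cwindow w i l) - count_mem b (cwindow w i l) <= f i.
Proof.
move=> f_step i l.
suff telescope : f (i + l) + count_mem a (cwindow w i l) = f i + count_mem b (cwindow w i l).
  by lia.
elim: l => [|l IHl]; first by rewrite addn0.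
rewrite cwindowS -!cats1 !count_cat /= !addn0 addnS.
by rewrite addnCA f_step addnCA addnA IHl -addnA.
Qed.

Lemma cycle_nth (T : eqType) (e : rel T) (x0 : T) (c : seq T) m :
  cycle e c -> m < size c -> e (nth x0 c m) (nth x0 c (m.+1 %% size c)).
Proof.
rewrite (cycle_path x0) => /(pathP x0) e_c m_c.
case: (ltnP m.+1 (size c)) => [m1_c|c_m1]; first by rewrite modn_small // (e_c m.+1).
have m1E : m.+1 = size c by lia.
have := e_c 0 (leq_ltn_trans (leq0n m) m_c).
by rewrite m1E modnn (last_nth x0) -m1E.
Qed.

Lemma size_hamiltonian_cycle (T : finType) (e : rel T) (c : seq T) :
  hamiltonian_cycle e c -> size c = #|T|.
Proof.
by case=> c_uniq c_all _; rewrite -(card_uniqP c_uniq); apply: eq_card => x; rewrite c_all.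
Qed.

Section Nodes.
Variables k n : nat.
Implicit Types s t : node k n.

Lemma size_vals s : size (vals s) = n.
Proof. by rewrite size_map size_tuple. Qed.

Lemma head_vals_lt s : 0 < n -> head 0 (vals s) < k.
Proof.
by case: s => [[|x xs] /= /eqP <-] //; rewrite /vals /= ltn_ord.
Qed.

Lemma vals_dB_arc s t : 0 < n -> dB_arc s t ->
  vals t = rcons (behead (vals s)) (last 0 (vals t)).
Proof.
move=> n_gt0 /eqP; rewrite drop1 => ->.
have := size_vals t; case/lastP: (vals t) => [|vt y]; first by move=> /= n0; lia.
by rewrite size_rcons last_rcons => <- /=; rewrite -cats1 take_size_cat // cats1.
Qed.

Lemma nth_vals_dB_arc s t m : dB_arc s t -> m.+1 < n ->
  nth 0 (vals t) m = nth 0 (vals s) m.+1.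
Proof.
move=> st m1_n; rewrite (vals_dB_arc (ltn_trans (ltn0Sn m) m1_n) st) nth_rcons.
by rewrite size_behead size_vals ifT ?nth_behead //; lia.
Qed.

Lemma vals_inj : injective (@vals k n).
Proof. by move=> s t /(inj_map val_inj) /val_inj. Qed.

Definition weight (d : node k n -> 'I_k) (A : pred nat) s : nat :=
  count A (vals s) + A (val (d s)).

Lemma weight_le d A s : weight d A s <= n.+1.
Proof.
by rewrite /weight -addn1 leq_add ?leq_b1 // -{2}(size_vals s) count_size.
Qed.

Lemma weight_valid_arc d A s t : 0 < n -> valid_arc d s t ->
  weight d A t + A (head 0 (vals s)) = weight d A s + A ((head 0 (vals s) + 1) %% k).
Proof.
move=> n_gt0 /andP [st symbols]; rewrite /weight (vals_dB_arc n_gt0 st).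
have -> : vals s = head 0 (vals s) :: behead (vals s).
  by have := size_vals s; case: (vals s) => //= n0; lia.
rewrite -cats1 count_cat /=.
by case/orP: symbols => /andP [/eqP <- /eqP ->] /=; lia.
Qed.

Lemma weight_interval_valid_arc d lo hi s t :
  0 < n -> lo < k -> hi < k -> lo != hi -> valid_arc d s t ->
  weight d (in_cyc_interval lo hi) t + (head 0 (vals s) == hi)
  = weight d (in_cyc_interval lo hi) s + (head 0 (vals s) == lo).
Proof.
move=> n_gt0 lo_k hi_k lo_hi st.
have := in_cyc_interval_succ lo_k hi_k lo_hi (head_vals_lt s n_gt0).
have := weight_valid_arc (in_cyc_interval lo hi) n_gt0 st; lia.
Qed.

End Nodes.

Definition first_symbols k n (c : seq (node k n)) : seq nat :=
  [seq head 0 (vals s) | s <- c].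

Section HamiltonianCycle.
Variables (k n : nat) (d : node k n -> 'I_k) (c : seq (node k n)).
Hypotheses (n_gt0 : 0 < n) (c_ham : hamiltonian_cycle (valid_arc d) c).

Local Notation N := (size c).
Local Notation w := (first_symbols c).

Lemma size_first_symbols : size w = N.
Proof. exact: size_map. Qed.

Lemma nth_first_symbols x0 i : i < N -> nth 0 w i = head 0 (vals (nth x0 c i)).
Proof. exact: nth_map. Qed.

Lemma valid_arc_nth_succ x0 m : valid_arc d (nth x0 c (m %% N)) (nth x0 c (m.+1 %% N)).
Proof.
case: c_ham => _ /(_ x0) x0_c c_cycle.
have N_gt0 : 0 < N by case: (c) x0_c.
have := cycle_nth x0 c_cycle (ltn_pmod m N_gt0).
by rewrite -addn1 modnDml addn1.
Qed.

Lemma nth_vals_nth_shift x0 i j m : i < N -> j + m < n ->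
  nth 0 (vals (nth x0 c ((i + j) %% N))) m = nth 0 (vals (nth x0 c i)) (j + m).
Proof.
move=> i_N; elim: j m => [|j IHj] m jm; first by rewrite addn0 modn_small.
have /andP [arc _] := valid_arc_nth_succ x0 (i + j).
by rewrite addnS (nth_vals_dB_arc arc) ?IHj ?addSnnS //; lia.
Qed.

Lemma cwindow_first_symbols x0 i : i < N -> cwindow w i n = vals (nth x0 c i).
Proof.
move=> i_N; apply: (@eq_from_nth _ 0); first by rewrite size_map size_iota size_vals.
rewrite size_map size_iota => j j_n.
rewrite (nth_map 0) ?size_iota // nth_iota // add0n size_first_symbols.
rewrite (nth_first_symbols x0) ?ltn_pmod //; last by case: (c) i_N.
by rewrite -nth0 nth_vals_nth_shift ?addn0.
Qed.

Lemma occurrences_first_symbols (s : node k n) : occurrences w (vals s) = 1.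
Proof.
case: c_ham => c_uniq c_all _.
rewrite /occurrences size_vals size_first_symbols.
rewrite (@eq_in_count _ _ (fun i => nth s c i == s)); last first.
  move=> i; rewrite mem_iota add0n => /andP [_ i_N] /=.
  by rewrite (cwindow_first_symbols s i_N) (inj_eq (@vals_inj _ _)).
rewrite -(count_map (nth s c) (pred1 s)) -/(mkseq _ _) mkseq_nth.
by rewrite count_uniq_mem // c_all.
Qed.

Lemma de_bruijn_first_symbols : de_bruijn k n w.
Proof.
split.
- by rewrite size_first_symbols (size_hamiltonian_cycle c_ham) card_tuple card_ord.
- by rewrite all_map; apply/allP => s _ /=; exact: head_vals_lt.
- exact: occurrences_first_symbols.
Qed.

Lemma discrepancy_first_symbols_le : discrepancy k w <= n.+1.
Proof.
apply/bigmax_leqP => i _; apply/bigmax_leqP => l _.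
apply/bigmax_leqP => a _; apply/bigmax_leqP => b _.
have [-> | b_a] := eqVneq (b : nat) a; first by rewrite subnn.
pose x0 := nseq_tuple n a.
pose f m := weight d (in_cyc_interval b a) (nth x0 c (m %% N)).
have N_gt0 : 0 < N by case: (c) i => [[]|].
apply: leq_trans (weight_le d _ (nth x0 c (i %% N))).
apply: (@count_cwindow_sub_le _ f) => m.
rewrite size_first_symbols (nth_first_symbols x0) ?ltn_pmod //.
exact: weight_interval_valid_arc n_gt0 (ltn_ord b) (ltn_ord a) b_a (valid_arc_nth_succ x0 m).
Qed.

End HamiltonianCycle.

Theorem theorem2 (k n : nat) (hk : 1 <= k) (hn : 1 <= n)
  (d : node k n -> 'I_k) (c : seq (node k n)) :
  hamiltonian_cycle (valid_arc d) c ->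
  let w := [seq head 0 (vals s) | s <- c] in
  de_bruijn k n w /\ discrepancy k w <= n + 1.
Proof.
move=> c_ham w; rewrite addn1; split.
- exact: de_bruijn_first_symbols hn c_ham.
- exact: discrepancy_first_symbols_le hn c_ham.
Qed.
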